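(* There is a constant $C$ such that for every $N\ge 1$ and every nonempty submatrix $B$ of an $N\times N$ matrix, the quadtree over the $N\times N$ matrix satisfies $|I(B)|\le CN$; that is, $|I(B)|=O(N)$.
   Context: The quadtree over an $N\times N$ matrix (coordinates $\{0,\dots,N-1\}^2$) is the rooted tree of nodes defined as follows. Each node covers a submatrix $[x_0,x_1][y_0,y_1]=\{(x,y):x_0\le x\le x_1,\ y_0\le y\le y_1\}$. The root covers $[0,N-1][0,N-1]$. A node covering $[x_0,x_1][y_0,y_1]$ with more than one element has as children the nodes covering those of the four submatrices $[x_0,x_m][y_0,y_m]$, $[x_m+1,x_1][y_0,y_m]$, $[x_0,x_m][y_m+1,y_1]$, $[x_m+1,x_1][y_m+1,y_1]$ that are nonempty, where $x_m=\lfloor(x_0+x_1)/2\rfloor$, $y_m=\lfloor(y_0+y_1)/2\rfloor$; nodes covering one element have no children. For a submatrix $B$, $S(B)$ denotes the smallest set of mutually disjoint quadtree nodes whose union is $B$ (the inclusion-maximal nodes contained in $B$), and $I(B)=\bigcup_{n\in S(B)}\{m: m \text{ a quadtree node with } m\supseteq n\}$. *)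

From mathcomp Require Import all_boot.
Set Implicit Arguments. Unset Strict Implicit. Unset Printing Implicit Defensive.

(* A submatrix [x0,x1][y0,y1] is encoded as the tuple (x0, x1, y0, y1). *)
Definition rect := (nat * nat * nat * nat)%type.

Definition rx0 (r : rect) := r.1.1.1.
Definition rx1 (r : rect) := r.1.1.2.
Definition ry0 (r : rect) := r.1.2.
Definition ry1 (r : rect) := r.2.

Definition in_rect (r : rect) (x y : nat) : bool :=
  (rx0 r <= x <= rx1 r) && (ry0 r <= y <= ry1 r).

Definition subrect (r r' : rect) : Prop :=
  forall x y, in_rect r x y -> in_rect r' x y.

Definition nonempty_rect (r : rect) : bool := (rx0 r <= rx1 r) && (ry0 r <= ry1 r).

Definition multi_rect (r : rect) : bool := (rx0 r < rx1 r) || (ry0 r < ry1 r).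

Definition child (r c : rect) : Prop :=
  let xm := (rx0 r + rx1 r) %/ 2 in
  let ym := (ry0 r + ry1 r) %/ 2 in
  multi_rect r /\ nonempty_rect c /\
  ((rx0 c, rx1 c) = (rx0 r, xm) \/ (rx0 c, rx1 c) = (xm.+1, rx1 r)) /\
  ((ry0 c, ry1 c) = (ry0 r, ym) \/ (ry0 c, ry1 c) = (ym.+1, ry1 r)).

(* the submatrices covered by nodes of the quadtree over an N x N matrix *)
Inductive qnode (N : nat) : rect -> Prop :=
| qnode_root : qnode N (0, N.-1, 0, N.-1)
| qnode_child r c : qnode N r -> child r c -> qnode N c.

Definition submatrix (N : nat) (B : rect) : Prop :=
  rx0 B <= rx1 B < N /\ ry0 B <= ry1 B < N.

(* S(B): inclusion-maximal quadtree nodes contained in B *)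
Definition inS (N : nat) (B n : rect) : Prop :=
  qnode N n /\ subrect n B /\
  forall m, qnode N m -> subrect n m -> subrect m B -> m = n.

(* I(B): quadtree nodes containing some node of S(B) *)
Definition inI (N : nat) (B m : rect) : Prop :=
  qnode N m /\ exists n, inS N B n /\ subrect n m.

From mathcomp Require Import all_boot zify.

Set Implicit Arguments.
Unset Strict Implicit.
Unset Printing Implicit Defensive.

(* Every quadtree node at depth d is a product X x Y of two depth-d cells of the
   dyadic splitting of [0, N-1]. A node m of I(B) other than the root has a parent
   P which meets B (it contains a node of S(B)) but is not contained in B
   (otherwise m would not be maximal); hence one of the four lines carrying an
   edge of B cuts P. Along that line P is the unique depth-d cell containing the
   edge coordinate, so for each d at most 4 * 2 * 2^(d+1) nodes m arise this way.
   Non-degenerate cells only occur at depths with 2^d < N, and summing the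
   geometric series gives |I(B)| <= 1 + 32 N. *)

Definition interval := (nat * nat)%type.

Definition halves (J : interval) : seq interval :=
  if J.1 < J.2 then [:: (J.1, (J.1 + J.2) %/ 2); (((J.1 + J.2) %/ 2).+1, J.2)]
  else [:: J].

Fixpoint dyadic_level (I : interval) (d : nat) : seq interval :=
  if d is d'.+1 then flatten (map halves (dyadic_level I d')) else [:: I].

Fixpoint dyadic_cell (I : interval) (d p : nat) : interval :=
  if d is d'.+1 then
    let J := dyadic_cell I d' p in
    if J.1 < J.2 then
      if p <= (J.1 + J.2) %/ 2 then (J.1, (J.1 + J.2) %/ 2)
      else (((J.1 + J.2) %/ 2).+1, J.2)
    else J
  else I.

Lemma halves_sub J K : J \in halves K -> K.1 <= J.1 /\ J.2 <= K.2.
Proof. by rewrite /halves; case: ifP => ?; rewrite !inE; [case/orP|]; move=> /eqP -> /=; lia. Qed.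

Lemma halves_length J K : J \in halves K -> (J.2 - J.1) * 2 <= K.2 - K.1.
Proof. by rewrite /halves; case: ifP => ?; rewrite !inE; [case/orP|]; move=> /eqP -> /=; lia. Qed.

Lemma size_halves J : size (halves J) <= 2.
Proof. by rewrite /halves; case: ifP. Qed.

Lemma size_flatten_halves s : size (flatten (map halves s)) <= 2 * size s.
Proof. by elim: s => //= J s IH; rewrite size_cat mulnS leq_add ?size_halves. Qed.

Lemma size_dyadic_level I d : size (dyadic_level I d) <= 2 ^ d.
Proof.
elim: d => //= d IH; rewrite expnS.
by apply: leq_trans (size_flatten_halves _) _; rewrite leq_mul2l.
Qed.

Lemma dyadic_level_length I d J :
  J \in dyadic_level I d -> (J.2 - J.1) * 2 ^ d <= I.2 - I.1.
Proof.
elim: d J => [|d IH] J /=; first by rewrite inE => /eqP ->; rewrite muln1.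
case/flatten_mapP => K /IH K_len /halves_length J_len.
by rewrite expnS mulnA; apply: leq_trans K_len; rewrite leq_mul2r J_len orbT.
Qed.

Lemma dyadic_level_depth I d J :
  J \in dyadic_level I d -> J.1 < J.2 -> 2 ^ d <= I.2 - I.1.
Proof.
move=> /dyadic_level_length J_len J_lt; apply: leq_trans J_len.
by rewrite leq_pmull // subn_gt0.
Qed.

Lemma dyadic_cellE I d p J :
  J \in dyadic_level I d -> J.1 <= p <= J.2 -> dyadic_cell I d p = J.
Proof.
elim: d J => [|d IH] J /=; first by rewrite inE => /eqP ->.
case/flatten_mapP => -[k1 k2] K_lev J_half p_in.
have p_K : k1 <= p <= k2 by have := halves_sub J_half; case: J p_in {J_half} => /=; lia.
rewrite (IH _ K_lev p_K) /=.
case: J J_half p_in => j1 j2; rewrite /halves /=.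
by case: ifP => K_lt; rewrite !inE; [case/orP|];
  move=> /eqP [-> ->] //= p_in; case: ifP => //; lia.
Qed.

Definition side (N : nat) : interval := (0, N.-1).

Definition xspan (r : rect) : interval := (rx0 r, rx1 r).
Definition yspan (r : rect) : interval := (ry0 r, ry1 r).
Definition rect_of (X Y : interval) : rect := (X.1, X.2, Y.1, Y.2).

Lemma rect_ofK r : rect_of (xspan r) (yspan r) = r.
Proof. by case: r => [[[]]]. Qed.

Lemma child_halves r c :
  child r c -> xspan c \in halves (xspan r) /\ yspan c \in halves (yspan r).
Proof.
case: r c => [[[x0 x1] y0 y1]] [[[x0' x1'] y0' y1']].
rewrite /child /multi_rect /nonempty_rect /xspan /yspan /rx0 /rx1 /ry0 /ry1 /halves /=.
move=> [_ [/andP [x_le y_le] [cx cy]]]; split; case: ifP => lt; rewrite !inE.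
- by case: cx => -[-> ->]; rewrite eqxx ?orbT.
- by case: cx => -[? ?]; subst; [apply/eqP; congr pair|]; lia.
- by case: cy => -[-> ->]; rewrite eqxx ?orbT.
- by case: cy => -[? ?]; subst; [apply/eqP; congr pair|]; lia.
Qed.

Lemma child_neq r c : child r c -> c <> r.
Proof.
case: r c => [[[x0 x1] y0 y1]] [[[x0' x1'] y0' y1']].
rewrite /child /multi_rect /rx0 /rx1 /ry0 /ry1 /=.
move=> [r_multi [_ [cx cy]]] [? ? ? ?].
by case: cx => -[? ?]; case: cy => -[? ?]; lia.
Qed.

Lemma child_subrect r c : child r c -> subrect c r.
Proof.
case: r c => [[[x0 x1] y0 y1]] [[[x0' x1'] y0' y1']].
rewrite /child /subrect /in_rect /rx0 /rx1 /ry0 /ry1 /=.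
by move=> [_ [_ [cx cy]]] x y; case: cx => -[-> ->]; case: cy => -[-> ->]; lia.
Qed.

Lemma qnode_nonempty N r : qnode N r -> nonempty_rect r.
Proof. by case=> [|r' c _ [_ []]]. Qed.

Lemma qnode_dyadic N r : qnode N r ->
  exists d, xspan r \in dyadic_level (side N) d /\ yspan r \in dyadic_level (side N) d.
Proof.
elim=> [|P c _ [d [Px Py]] /child_halves [cx cy]]; first by exists 0; rewrite !inE.
by exists d.+1; split; apply/flatten_mapP; [exists (xspan P) | exists (yspan P)].
Qed.

Definition meets_edge_line (P B : rect) : bool :=
  [|| rx0 P <= rx0 B <= rx1 P, rx0 P <= rx1 B <= rx1 P,
      ry0 P <= ry0 B <= ry1 P | ry0 P <= ry1 B <= ry1 P].

Lemma overlap_meets_edge_line P B x y :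
  in_rect P x y -> in_rect B x y -> ~ subrect P B -> meets_edge_line P B.
Proof.
move=> Pxy Bxy PnB; apply/negPn/negP => off; apply: PnB => x' y'.
by move: off Pxy Bxy; rewrite /meets_edge_line /in_rect; lia.
Qed.

Lemma inI_parent N B m : inI N B m ->
  m = (0, N.-1, 0, N.-1) \/
  exists P, [/\ qnode N P, child P m & meets_edge_line P B].
Proof.
move=> [m_node [n [[n_node [nB n_max]] nm]]].
case: m / m_node nm => [|P m P_node Pm] nm; [by left | right; exists P; split=> //].
have mP := child_subrect Pm.
have PnB : ~ subrect P B.
  move=> PB; apply: (child_neq Pm).
  have -> : m = n by apply: n_max (qnode_child P_node Pm) nm _ => x y /mP /PB.
  by apply/esym; apply: n_max P_node _ PB => x y /nm /mP.
have n_corner : in_rect n (rx0 n) (ry0 n).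
  move: (qnode_nonempty n_node); rewrite /in_rect /nonempty_rect.
  by case/andP=> -> ->; rewrite !leqnn.
exact: overlap_meets_edge_line (mP _ _ (nm _ _ n_corner)) (nB _ _ n_corner) PnB.
Qed.

Definition boundary_children (N : nat) (B : rect) (d : nat) : seq rect :=
  let cells p := halves (dyadic_cell (side N) d p) in
  let level := dyadic_level (side N) d.+1 in
  [seq rect_of X Y | X <- cells (rx0 B) ++ cells (rx1 B), Y <- level] ++
  [seq rect_of X Y | X <- level, Y <- cells (ry0 B) ++ cells (ry1 B)].

Lemma size_boundary_children N B d : size (boundary_children N B d) <= 16 * 2 ^ d.
Proof.
rewrite /boundary_children size_cat !size_allpairs.
have cells_size p q : size (halves (dyadic_cell (side N) d p) ++
                            halves (dyadic_cell (side N) d q)) <= 4.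
  by rewrite size_cat (leq_add (size_halves _) (size_halves _)).
have := size_dyadic_level (side N) d.+1; rewrite expnS => level_size.
have := leq_mul (cells_size (rx0 B) (rx1 B)) level_size.
have := leq_mul level_size (cells_size (ry0 B) (ry1 B)).
lia.
Qed.

Lemma child_mem_boundary_children N B d P m :
  xspan P \in dyadic_level (side N) d -> yspan P \in dyadic_level (side N) d ->
  child P m -> meets_edge_line P B -> m \in boundary_children N B d.
Proof.
move=> Px Py /child_halves [mx my] edge.
have mx_lev : xspan m \in dyadic_level (side N) d.+1 by apply/flatten_mapP; exists (xspan P).
have my_lev : yspan m \in dyadic_level (side N) d.+1 by apply/flatten_mapP; exists (yspan P).
rewrite -(rect_ofK m) mem_cat; case/or4P: edge => edge.
- rewrite -(dyadic_cellE Px edge) in mx.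
  by apply/orP; left; apply: allpairs_f; rewrite ?mem_cat ?mx.
- rewrite -(dyadic_cellE Px edge) in mx.
  by apply/orP; left; apply: allpairs_f; rewrite ?mem_cat ?mx ?orbT.
- rewrite -(dyadic_cellE Py edge) in my.
  by apply/orP; right; apply: allpairs_f; rewrite ?mem_cat ?my.
- rewrite -(dyadic_cellE Py edge) in my.
  by apply/orP; right; apply: allpairs_f; rewrite ?mem_cat ?my ?orbT.
Qed.

Lemma inI_boundary_children N B m : inI N B m ->
  m = (0, N.-1, 0, N.-1) \/ exists2 d, 2 ^ d < N & m \in boundary_children N B d.
Proof.
case/inI_parent => [-> | [P [P_node Pm edge]]]; [by left | right].
have [d [Px Py]] := qnode_dyadic P_node.
exists d; last exact: child_mem_boundary_children Px Py Pm edge.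
have d_pos : 0 < 2 ^ d by rewrite expn_gt0.
case: Pm => /orP [lt | lt] _.
- by have := dyadic_level_depth Px lt; rewrite /=; lia.
- by have := dyadic_level_depth Py lt; rewrite /=; lia.
Qed.

Lemma size_flatten_geometric (T : Type) (f : nat -> seq T) c K :
  (forall d, size (f d) <= c * 2 ^ d) ->
  size (flatten [seq f d | d <- iota 0 K]) <= c * 2 ^ K.
Proof.
move=> f_size; elim: K => // K IH.
rewrite -addn1 iotaD map_cat flatten_cat size_cat /= cats0 expnD muln2 -addnn mulnDr.
exact: leq_add IH (f_size K).
Qed.

Theorem theorem2 :
  exists C : nat, forall N : nat, 1 <= N ->
    forall B : rect, submatrix N B ->
    forall s : seq rect, uniq s -> (forall m, m \in s -> inI N B m) ->
    size s <= C * N.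
Proof.
(* The counting never uses that B lies inside the matrix. *)
exists 33 => N N_gt0 B _ s s_uniq s_inI.
pose K := (trunc_log 2 N).+1.
have s_sub : {subset s <= (0, N.-1, 0, N.-1) ::
                          flatten [seq boundary_children N B d | d <- iota 0 K]}.
  move=> m /s_inI /inI_boundary_children [-> | [d d_small m_in]]; rewrite inE ?eqxx //.
  apply/orP; right; apply/flatten_mapP; exists d => //.
  by rewrite mem_iota ltnS trunc_log_max // ltnW.
apply: leq_trans (uniq_leq_size s_uniq s_sub) _.
apply: leq_ltn_trans (size_flatten_geometric K (size_boundary_children N B)) _.
have : 2 ^ K <= 2 * N by rewrite expnS leq_mul2l trunc_logP.
lia.
Qed.
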